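(* Let $\mu$ be a distribution on $\Sigma\times\Gamma\times\Phi$ (finite sets). If $\mu$ has no $\mathbb{Z}$-embeddings, then $\mu$ is pairwise-connected.
   Context: An embedding of $\mu$ into an Abelian group $A$ is a triple of maps $\mathsf{a}:\Sigma\to A$, $\mathsf{b}:\Gamma\to A$, $\mathsf{c}:\Phi\to A$ with $\mathsf{a}(x)+\mathsf{b}(y)+\mathsf{c}(z)=0$ for all $(x,y,z)\in\mathsf{supp}(\mu)$; $\mu$ has no $\mathbb{Z}$-embeddings if every embedding into $(\mathbb{Z},+)$ consists of constant maps. $\mu$ is $(x,y)$-pairwise-connected if the bipartite graph on vertex set $\Sigma\sqcup\Gamma$, with an edge between $x\in\Sigma$ and $y\in\Gamma$ whenever there is $z$ with $(x,y,z)\in\mathsf{supp}(\mu)$, is connected; $(y,z)$- and $(x,z)$-pairwise-connectivity are defined analogously; $\mu$ is pairwise-connected if it is $(x,y)$-, $(y,z)$- and $(x,z)$-pairwise-connected. *)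

From mathcomp Require Import all_boot all_order all_algebra.
Set Implicit Arguments. Unset Strict Implicit. Unset Printing Implicit Defensive.
Import Order.TTheory GRing.Theory Num.Theory.
Local Open Scope ring_scope.

Definition is_distribution (R : realFieldType) (S G F : finType)
  (mu : S -> G -> F -> R) : Prop :=
  (forall x y z, 0 <= mu x y z) /\ \sum_(x : S) \sum_(y : G) \sum_(z : F) mu x y z = 1.

Definition in_supp (R : realFieldType) (S G F : finType)
  (mu : S -> G -> F -> R) x y z : bool := 0 < mu x y z.

Definition Z_embedding (R : realFieldType) (S G F : finType)
  (mu : S -> G -> F -> R) (a : S -> int) (b : G -> int) (c : F -> int) : Prop :=
  forall x y z, in_supp mu x y z -> a x + b y + c z = 0.

Definition const_map (T : Type) (f : T -> int) : Prop := forall t t', f t = f t'.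

Definition no_Z_embeddings (R : realFieldType) (S G F : finType)
  (mu : S -> G -> F -> R) : Prop :=
  forall a b c, Z_embedding mu a b c -> [/\ const_map a, const_map b & const_map c].

Definition bip_rel (A B : finType) (r : A -> B -> bool) : rel (A + B)%type :=
  fun u v => match u, v with
             | inl x, inr y => r x y
             | inr y, inl x => r x y
             | _, _ => false
             end.

Definition bip_connected (A B : finType) (r : A -> B -> bool) : Prop :=
  forall u v : (A + B)%type, connect (bip_rel r) u v.

Definition xy_connected (R : realFieldType) (S G F : finType)
  (mu : S -> G -> F -> R) : Prop :=
  bip_connected (fun (x : S) (y : G) => [exists z : F, in_supp mu x y z]).
Definition yz_connected (R : realFieldType) (S G F : finType)
  (mu : S -> G -> F -> R) : Prop :=
  bip_connected (fun (y : G) (z : F) => [exists x : S, in_supp mu x y z]).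
Definition xz_connected (R : realFieldType) (S G F : finType)
  (mu : S -> G -> F -> R) : Prop :=
  bip_connected (fun (x : S) (z : F) => [exists y : G, in_supp mu x y z]).

Definition pairwise_connected (R : realFieldType) (S G F : finType)
  (mu : S -> G -> F -> R) : Prop :=
  [/\ xy_connected mu, yz_connected mu & xz_connected mu].

From mathcomp Require Import all_boot all_order all_algebra.
Set Implicit Arguments. Unset Strict Implicit. Unset Printing Implicit Defensive.
Import Order.TTheory GRing.Theory Num.Theory.
Local Open Scope ring_scope.

(* If the bipartite graph of a relation were disconnected, the 0/1 indicator
   of a connected component on one side, paired with its negation on the other
   side, would be a non-constant integer potential vanishing along every edge
   (non-constant because the support of a distribution provides an edge).
   Applied to the projection of the support of mu to Sigma x Gamma, this turns
   a disconnected projection into a non-constant Z-embedding whose third map is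
   0; the other two projections are the same one for mu with its coordinates
   permuted, which preserves having no Z-embeddings. *)

Section BipartiteConnectivity.

Variables (A B : finType) (r : A -> B -> bool).

Lemma connect_bip_edge u x y :
  r x y -> connect (bip_rel r) u (inl x) = connect (bip_rel r) u (inr y).
Proof.
by move=> rxy; apply/idP/idP => /connect_trans; apply; apply: connect1.
Qed.

Lemma bip_connected_of_rigid x0 y0 :
  r x0 y0 ->
  (forall (f : A -> int) (g : B -> int),
     (forall x y, r x y -> f x + g y = 0) -> const_map f /\ const_map g) ->
  bip_connected r.
Proof.
move=> rxy0 rigid u v.
pose C w := connect (bip_rel r) u w.
have edge x y : r x y -> C (inl x) = C (inr y) by apply: connect_bip_edge.
have [cf cg] : const_map (fun x => C (inl x) : int) /\
               const_map (fun y => - (C (inr y) : int)).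
  by apply: rigid => x y /edge ->; rewrite subrr.
have int_of_bool_inj : injective (fun b : bool => b : int) by do 2!case.
have sideA x x' : C (inl x) = C (inl x') by apply: int_of_bool_inj; apply: cf.
have sideB y y' : C (inr y) = C (inr y').
  by apply: int_of_bool_inj; apply: oppr_inj; apply: cg.
have anchored w : C w -> C (inl x0).
  case: w => [a|b]; first by rewrite (sideA x0 a).
  by rewrite (edge x0 y0 rxy0) (sideB y0 b).
have Cx0 : C (inl x0) := anchored u (connect0 _ u).
change (C v); case: v => [a|b]; first by rewrite (sideA a x0).
by rewrite (sideB b y0) -(edge x0 y0 rxy0).
Qed.

End BipartiteConnectivity.

Section Embeddings.

Variables (R : realFieldType) (S G F : finType) (mu : S -> G -> F -> R).

Lemma distribution_supp_nonempty :
  is_distribution mu -> exists x y z, in_supp mu x y z.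
Proof.
move=> [ge0 sum1].
case: (pickP (fun t : S * G * F => in_supp mu t.1.1 t.1.2 t.2)).
  by move=> [[x y] z] s; exists x, y, z.
move=> none; suff : \sum_x \sum_y \sum_z mu x y z = 0.
  by rewrite sum1 => /eqP; rewrite oner_eq0.
apply: big1 => x _; apply: big1 => y _; apply: big1 => z _.
by apply/eqP; move: (none (x, y, z)); rewrite /in_supp lt_def ge0 andbT => /negbFE.
Qed.

Lemma no_Z_embeddings_rotate :
  no_Z_embeddings mu -> no_Z_embeddings (fun y z x => mu x y z).
Proof.
move=> noZ b c a emb.
suff [] : [/\ const_map a, const_map b & const_map c] by [].
by apply: noZ => x y z /emb <-; rewrite [RHS]addrC addrA.
Qed.

Lemma no_Z_embeddings_swap_yz :
  no_Z_embeddings mu -> no_Z_embeddings (fun x z y => mu x y z).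
Proof.
move=> noZ a c b emb.
suff [] : [/\ const_map a, const_map b & const_map c] by [].
by apply: noZ => x y z /emb <-; rewrite addrAC.
Qed.

Lemma xy_connected_of_no_Z_embeddings x0 y0 z0 :
  in_supp mu x0 y0 z0 -> no_Z_embeddings mu -> xy_connected mu.
Proof.
move=> s0 noZ; apply: (@bip_connected_of_rigid _ _ _ x0 y0).
  by apply/existsP; exists z0.
move=> f g emb; have [] // := noZ f g (fun=> 0).
by move=> x y z sxyz; rewrite addr0; apply: emb; apply/existsP; exists z.
Qed.

End Embeddings.

Theorem lemma1p3 (R : realFieldType) (S G F : finType) (mu : S -> G -> F -> R) :
  is_distribution mu -> no_Z_embeddings mu -> pairwise_connected mu.
Proof.
move=> /distribution_supp_nonempty [x [y [z s]]] noZ; split.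
- exact: xy_connected_of_no_Z_embeddings s noZ.
- exact (xy_connected_of_no_Z_embeddings (mu := fun y z x => mu x y z) s
           (no_Z_embeddings_rotate noZ)).
- exact (xy_connected_of_no_Z_embeddings (mu := fun x z y => mu x y z) s
           (no_Z_embeddings_swap_yz noZ)).
Qed.
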